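(* Let $L$ be a Latin array of order $n$ that has a diagonal of weight $n-2$ and has no diagonal of weight greater than $n-2$. If $L$ has a diagonal of type B, then there exists a diagonal of type A that can be reached from it by a sequence of $\#$-swaps.
   Context: A Latin array of order $n$ is an $n\times n$ matrix each of whose cells contains a symbol (from an arbitrary set of symbols), such that no symbol occurs more than once in any row or in any column. A diagonal of an $n\times n$ array is a selection of $n$ cells, one from each row and one from each column; its weight is the number of distinct symbols on it. A diagonal of weight $n-2$ is of type A if two symbols each occur exactly twice on it (all others once), and of type B if one symbol occurs exactly three times on it (all others once). A $\#$-swap is the following operation: given a diagonal $T$ of weight $w$ and two of its cells $(i_0,j_0)$ and $(i_1,j_1)$ such that the remaining $n-2$ cells of $T$ still carry $w$ distinct symbols, replace these two cells by $(i_0,j_1)$ and $(i_1,j_0)$, obtaining a new diagonal (of weight at least $w$). *)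

From mathcomp Require Import all_boot all_order all_fingroup.
From Stdlib Require Import Relation_Operators.
Set Implicit Arguments. Unset Strict Implicit. Unset Printing Implicit Defensive.

Definition latin_array (T : eqType) (n : nat) (L : 'I_n -> 'I_n -> T) : Prop :=
  (forall i j1 j2, L i j1 = L i j2 -> j1 = j2) /\
  (forall i1 i2 j, L i1 j = L i2 j -> i1 = i2).

(* A diagonal is given by a permutation s: its cells are (i, s i). *)
Definition diag_symbols (T : eqType) (n : nat) (L : 'I_n -> 'I_n -> T)
  (s : 'S_n) : seq T := [seq L i (s i) | i <- enum 'I_n].

Definition weight (T : eqType) (n : nat) (L : 'I_n -> 'I_n -> T) (s : 'S_n) : nat :=
  size (undup (diag_symbols L s)).

Definition typeA (T : eqType) (n : nat) (L : 'I_n -> 'I_n -> T) (s : 'S_n) : Prop :=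
  weight L s = n - 2 /\
  exists a b : T, a != b /\
    count_mem a (diag_symbols L s) = 2 /\ count_mem b (diag_symbols L s) = 2 /\
    forall x, x \in diag_symbols L s -> x != a -> x != b ->
      count_mem x (diag_symbols L s) = 1.

Definition typeB (T : eqType) (n : nat) (L : 'I_n -> 'I_n -> T) (s : 'S_n) : Prop :=
  weight L s = n - 2 /\
  exists a : T,
    count_mem a (diag_symbols L s) = 3 /\
    forall x, x \in diag_symbols L s -> x != a ->
      count_mem x (diag_symbols L s) = 1.

(* A #-swap from diagonal s (cells (i0, s i0), (i1, s i1)) to diagonal s'
   (cells (i0, s i1), (i1, s i0)), allowed when the remaining n-2 cells of s
   still carry weight(s) distinct symbols. *)
Definition hash_swap (T : eqType) (n : nat) (L : 'I_n -> 'I_n -> T)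
  (s s' : 'S_n) : Prop :=
  exists i0 i1 : 'I_n, i0 != i1 /\
    size (undup [seq L i (s i) | i <- enum 'I_n & (i != i0) && (i != i1)])
      = weight L s /\
    forall i, s' i = s (tperm i0 i1 i).

Definition hash_reachable (T : eqType) (n : nat) (L : 'I_n -> 'I_n -> T) :
  'S_n -> 'S_n -> Prop := @clos_refl_trans _ (hash_swap L).

From mathcomp Require Import all_boot all_order all_fingroup.
From Stdlib Require Import Relation_Operators.
From mathcomp Require Import zify.

(* Let the symbol a occur three times on the type-B diagonal s, in rows i, j
   and k.  Exchanging the columns of rows i and k is a #-swap, since row j
   still carries a, and by maximality it keeps weight n - 2; hence the two
   incoming symbols L i (s k) and L k (s i) already occur on s, once each.
   If they differ, the new diagonal has type A.  If they coincide, it has type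
   B again, the new symbol sitting in rows i, k and some row r, and we repeat
   with row i fixed.  The symbol on each earlier pivot row stays in row i at
   the column of an earlier pivot, so by the Latin property the new pivot r is
   always fresh and the walk stops after fewer than n swaps. *)

Set Implicit Arguments.
Unset Strict Implicit.
Unset Printing Implicit Defensive.

Lemma undup_min_size (T : eqType) (s1 s2 : seq T) :
  {subset s1 <= s2} -> size (undup s2) <= size (undup s1) -> s1 =i s2.
Proof.
move=> s12 le21 y; rewrite -mem_undup -[RHS]mem_undup.
have sub : {subset undup s1 <= undup s2} by move=> z; rewrite !mem_undup => /s12.
by have [_ ->] := uniq_min_size (undup_uniq s1) sub le21.
Qed.

Lemma mem_count_gt0 (T : eqType) (y : T) (s : seq T) : (y \in s) = (0 < count_mem y s).
Proof. by rewrite -has_pred1 has_count. Qed.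

Lemma permM_tpermD (T : finType) (s : {perm T}) i k r :
  r != i -> r != k -> (tperm i k * s)%g r = s r.
Proof. by move=> ri rk; rewrite permM tpermD // eq_sym. Qed.

Section Diagonals.
Variables (T : eqType) (n : nat) (L : 'I_n -> 'I_n -> T).
Local Notation dg := (diag_symbols L).

Lemma mem_diag_symbols (s : 'S_n) r : L r (s r) \in dg s.
Proof. by apply: map_f; rewrite mem_enum. Qed.

Lemma diag_symbolsP (s : 'S_n) y : reflect (exists r, y = L r (s r)) (y \in dg s).
Proof.
apply: (iffP mapP) => [[r _ ->]|[r ->]]; first by exists r.
by exists r; rewrite ?mem_enum.
Qed.

Lemma count_diag_symbols (s : 'S_n) y :
  count_mem y (dg s) = \sum_(r < n) (L r (s r) == y).
Proof.
rewrite /diag_symbols count_map -sum1_count big_mkcond /= big_enum /=.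
by apply: eq_bigr => r _; case: (_ == _).
Qed.

Lemma card_diag_symbols (s : 'S_n) y :
  count_mem y (dg s) = #|[pred r | L r (s r) == y]|.
Proof.
rewrite count_diag_symbols -sum1_card [RHS]big_mkcond /=.
by apply: eq_bigr => r _; rewrite inE; case: (_ == _).
Qed.

Lemma count_diag_tperm (s : 'S_n) i k y : i != k ->
  count_mem y (dg (tperm i k * s)%g) + (L i (s i) == y) + (L k (s k) == y) =
  count_mem y (dg s) + (L i (s k) == y) + (L k (s i) == y).
Proof.
move=> ik.
have split2 (F : 'I_n -> nat) :
    \sum_(r < n) F r = F i + (F k + \sum_(r < n | (r != i) && (r != k)) F r).
  by rewrite (bigD1 i) // (bigD1 k) 1?eq_sym.
rewrite !count_diag_symbols !split2.
have -> : \sum_(r < n | (r != i) && (r != k)) (L r ((tperm i k * s)%g r) == y) =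
          \sum_(r < n | (r != i) && (r != k)) (L r (s r) == y).
  by apply: eq_bigr => r /andP [ri rk]; rewrite permM_tpermD.
rewrite !permM tpermL tpermR; lia.
Qed.

Definition off_diag_symbols (s : 'S_n) i k :=
  [seq L r (s r) | r <- enum 'I_n & (r != i) && (r != k)].

Lemma hash_swap_tperm (s : 'S_n) i k : i != k ->
  {subset dg s <= off_diag_symbols s i k} -> hash_swap L s (tperm i k * s)%g.
Proof.
move=> ik sub; exists i, k; split=> //; split; last by move=> r; rewrite permM.
apply/perm_size/perm_undup => y; apply/idP/idP; last exact: sub.
by case/mapP => r _ ->; apply: mem_diag_symbols.
Qed.

Lemma hash_swap_tperm_triple (s : 'S_n) i j k : i != k -> j != i -> j != k ->
  L j (s j) = L i (s i) -> L k (s k) = L i (s i) -> hash_swap L s (tperm i k * s)%g.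
Proof.
move=> ik ji jk Lj Lk; apply: hash_swap_tperm ik _ => y /diag_symbolsP [r ->].
have off q : q != i -> q != k -> L q (s q) \in off_diag_symbols s i k.
  by move=> qi qk; apply: map_f; rewrite mem_filter qi qk mem_enum.
have [->|ri] := eqVneq r i; first by rewrite -Lj off.
have [->|rk] := eqVneq r k; first by rewrite Lk -Lj off.
exact: off.
Qed.

End Diagonals.

Definition typeB_at (T : eqType) (n : nat) (L : 'I_n -> 'I_n -> T) (s : 'S_n) (a : T) :=
  [/\ weight L s = n - 2, count_mem a (diag_symbols L s) = 3 &
      forall y, y \in diag_symbols L s -> y != a -> count_mem y (diag_symbols L s) = 1].

Section Swap.
Variables (T : eqType) (n : nat) (L : 'I_n -> 'I_n -> T).
Hypothesis latinL : latin_array L.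
Hypothesis weight_max : forall s : 'S_n, weight L s <= n - 2.
Variables (s : 'S_n) (i k : 'I_n).
Hypotheses (ik : i != k) (Lk : L k (s k) = L i (s i)).
Hypothesis sB : typeB_at L s (L i (s i)).

Local Notation dg := (diag_symbols L).
Local Notation a := (L i (s i)).
Local Notation x_ik := (L i (s k)).
Local Notation x_ki := (L k (s i)).
Local Notation s' := (tperm i k * s)%g.

Lemma swap_symbol_ik_neq : x_ik != a.
Proof. by apply: contra_neq ik => /latinL.1 /perm_inj ->. Qed.

Lemma swap_symbol_ki_neq : x_ki != a.
Proof. by apply: contra_neq ik => /latinL.2 ->. Qed.

Lemma count_swap_tripled : count_mem a (dg s') = 1.
Proof.
case: sB => _ count_a _; have := count_diag_tperm L s a ik.
rewrite Lk eqxx count_a (negbTE swap_symbol_ik_neq) (negbTE swap_symbol_ki_neq).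
by rewrite /= !addn1 !addn0 => -[].
Qed.

Lemma count_swap_other y : y != a ->
  count_mem y (dg s') = count_mem y (dg s) + (x_ik == y) + (x_ki == y).
Proof.
move=> ya; have := count_diag_tperm L s y ik.
by rewrite Lk eq_sym (negbTE ya) /= !addn0.
Qed.

Lemma diag_symbols_swap : dg s' =i dg s.
Proof.
have sub : {subset dg s <= dg s'}.
  move=> y; rewrite !mem_count_gt0; case: (eqVneq y a) => [->|ya].
    by rewrite count_swap_tripled.
  by rewrite count_swap_other //; lia.
move=> y; apply/esym/(undup_min_size sub).
by case: sB; rewrite /weight => -> _ _; apply: weight_max.
Qed.

Lemma weight_swap : weight L s' = n - 2.
Proof. by case: sB => <- _ _; apply/perm_size/perm_undup/diag_symbols_swap. Qed.

Lemma mem_swap_symbol_ik : x_ik \in dg s.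
Proof.
by rewrite -diag_symbols_swap; have := mem_diag_symbols L s' i; rewrite permM tpermL.
Qed.

Lemma mem_swap_symbol_ki : x_ki \in dg s.
Proof.
by rewrite -diag_symbols_swap; have := mem_diag_symbols L s' k; rewrite permM tpermR.
Qed.

Lemma count_swap_ik : count_mem x_ik (dg s') = 2 + (x_ki == x_ik).
Proof.
case: sB => _ _ count1.
rewrite count_swap_other ?swap_symbol_ik_neq // eqxx.
by rewrite (count1 _ mem_swap_symbol_ik swap_symbol_ik_neq).
Qed.

Lemma count_swap_ki : count_mem x_ki (dg s') = 2 + (x_ik == x_ki).
Proof.
case: sB => _ _ count1.
rewrite count_swap_other ?swap_symbol_ki_neq // eqxx.
by rewrite (count1 _ mem_swap_symbol_ki swap_symbol_ki_neq) addnAC.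
Qed.

Lemma count_swap_others y : y \in dg s' -> y != x_ik -> y != x_ki ->
  count_mem y (dg s') = 1.
Proof.
move=> y_s' y_ik y_ki; have [->|ya] := eqVneq y a; first exact: count_swap_tripled.
case: sB => _ _ count1.
rewrite count_swap_other // eq_sym (negbTE y_ik) eq_sym (negbTE y_ki) !addn0.
by apply: count1 ya; rewrite -diag_symbols_swap.
Qed.

Lemma typeA_swap : x_ik != x_ki -> typeA L s'.
Proof.
move=> x_neq; split; first exact: weight_swap.
exists x_ik, x_ki; split=> //; split; [|split].
- by rewrite count_swap_ik eq_sym (negbTE x_neq).
- by rewrite count_swap_ki (negbTE x_neq).
- exact: count_swap_others.
Qed.

Lemma typeB_at_swap : x_ik = x_ki -> typeB_at L s' x_ik.
Proof.
move=> x_eq; split; first exact: weight_swap.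
  by rewrite count_swap_ik x_eq eqxx.
by move=> y y_s' y_x; apply: count_swap_others; rewrite -?x_eq.
Qed.

End Swap.

Section Walk.
Variables (T : eqType) (n : nat) (L : 'I_n -> 'I_n -> T).
Hypothesis latinL : latin_array L.
Hypothesis weight_max : forall s : 'S_n, weight L s <= n - 2.
Variable i : 'I_n.

(* Q lists the earlier values of j; its clause keeps the next pivot out of Q. *)
Definition walk_state (s : 'S_n) (j k : 'I_n) (Q : seq 'I_n) :=
  [/\ uniq [:: i, j, k & Q], L j (s j) = L i (s i), L k (s k) = L i (s i),
      typeB_at L s (L i (s i)) &
      {in Q, forall q, L q (s q) \in [seq L i (s z) | z <- j :: Q]}].

Lemma walk_state_step s j k Q : walk_state s j k Q -> L i (s k) = L k (s i) ->
  exists r, walk_state (tperm i k * s)%g k r (j :: Q).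
Proof.
case=> uniq_ijkQ Lj Lk sB onQ x_eq.
move: (uniq_ijkQ); rewrite /= !inE !negb_or.
case/and4P => /and3P [ij ik iQ] /andP [jk jQ] kQ uQ.
have /diag_symbolsP [r Er] := mem_swap_symbol_ik latinL weight_max ik Lk sB.
have x_neq := swap_symbol_ik_neq latinL s ik.
have ri : r != i by apply: contra_neq x_neq => ri; rewrite Er ri.
have rj : r != j by apply: contra_neq x_neq => rj; rewrite Er rj.
have rk : r != k by apply: contra_neq x_neq => rk; rewrite Er rk.
have rQ : r \notin Q.
  apply/negP => /onQ; rewrite -Er => /mapP [z zjQ /latinL.1 /perm_inj kz].
  by move: zjQ; rewrite -kz inE (negbTE kQ) orbF eq_sym (negbTE jk).
exists r; split.
- rewrite /= !inE !negb_or ![_ == r]eq_sym [k == j]eq_sym.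
  by rewrite ik ij iQ ri rk jk kQ rj rQ jQ uQ.
- by rewrite !permM tpermR tpermL.
- by rewrite permM_tpermD // permM tpermL.
- by rewrite permM tpermL; apply: typeB_at_swap.
move=> q; rewrite inE => /predU1P [->|qQ].
  have ji : j != i by rewrite eq_sym.
  rewrite permM_tpermD // Lj; apply/mapP; exists k; first exact: mem_head.
  by rewrite permM tpermR.
have [z zjQ Ez] := mapP (onQ q qQ).
have zi : z != i by apply: contraTneq zjQ => ->; rewrite inE negb_or ij iQ.
have zk : z != k by apply: contraTneq zjQ => ->; rewrite inE negb_or eq_sym jk kQ.
have qi : q != i by apply: contraTneq qQ => ->.
have qk : q != k by apply: contraTneq qQ => ->.
apply/mapP; exists z; first by rewrite inE zjQ orbT.
by rewrite !permM_tpermD.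
Qed.

Lemma walk_state_typeA_reachable s j k Q : walk_state s j k Q ->
  exists t, typeA L t /\ hash_reachable L s t.
Proof.
have [m] := ubnP (n - size Q); elim: m s j k Q => // m IHm s j k Q ltQm st.
case: (st) => uniq_ijkQ Lj Lk sB _.
have size_Q : (size Q).+3 <= n.
  by have := uniq_leq_size uniq_ijkQ (fun z _ => mem_enum 'I_n z); rewrite size_enum_ord.
move: uniq_ijkQ; rewrite /= !inE !negb_or => /and4P [/and3P [ij ik _] /andP [jk _] _ _].
have ji : j != i by rewrite eq_sym.
have swap_ik := hash_swap_tperm_triple ik ji jk Lj Lk.
have [x_eq|x_neq] := eqVneq (L i (s k)) (L k (s i)).
  have [r st'] := walk_state_step st x_eq.
  have [|t [tA reach_t]] := IHm _ _ _ _ _ st'; first by rewrite /=; lia.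
  by exists t; split=> //; apply: rt_trans (rt_step _ _ _ _ swap_ik) reach_t.
by exists (tperm i k * s)%g; split; [apply: typeA_swap | apply: rt_step].
Qed.

End Walk.

Theorem lemma2p2 (T : eqType) (n : nat) (L : 'I_n -> 'I_n -> T) :
  latin_array L ->
  (exists s : 'S_n, weight L s = n - 2) ->
  (forall s : 'S_n, weight L s <= n - 2) ->
  forall s : 'S_n, typeB L s ->
  exists t : 'S_n, typeA L t /\ hash_reachable L s t.
Proof.
(* The existence of a diagonal of weight n - 2 is implied by typeB L s. *)
move=> latinL _ weight_max s [w_s [a [count_a count1]]].
have : 2 < #|[pred r | L r (s r) == a]| by rewrite -card_diag_symbols count_a.
case/card_gt2P => i [j [k [[/eqP Li /eqP Lj /eqP Lk] [ij jk ki]]]].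
have st : walk_state L i s j k [::].
  split; rewrite ?Li ?Lj ?Lk //.
  by rewrite /= !inE !negb_or ij jk eq_sym ki.
exact: (walk_state_typeA_reachable latinL weight_max st).
Qed.
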